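(* Let $\beta>0$, $\tilde\lambda\in(0,1]$, $\mathcal{L}\ge 0$, $x\ge 0$, $y\le 0$, $z\ge 0$. For $\Delta>y$ let $p^D(\Delta)=\frac{x}{\Delta-y}$, and say that $\Delta$ satisfies the leverage constraint if $\Delta>y$ and $$\beta(\mathcal{L}+\Delta)\le \tilde\lambda\Big(z+\Delta\,p^D(\Delta)\Big).$$ Consider the quadratic polynomial in $\Delta$ $$-\beta \Delta^2 + \Delta\Big( \tilde \lambda (z+x) - \beta(\mathcal{L} - y)\Big) - \tilde\lambda zy + \beta\mathcal{L} y .$$ If its roots are real, denote them $\Delta_{\min}\le\Delta_{\max}$; then the set of $\Delta$ satisfying the leverage constraint is $[\Delta_{\min},\Delta_{\max}]\cap(y,\infty)$. If its roots are not real, then no $\Delta$ satisfies the leverage constraint.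
   Context: Single period $t$ of a stablecoin market model. A speculator owes $\mathcal{L}=\mathcal{L}_{t-1}$ stablecoins and holds Ether worth $z=n_{t-1}p^E_t$ dollars; $x=w^D\bar n_{t-1}p^E_t\ge0$ is the new dollar stablecoin demand from the stablecoin holder and $y=w^D\bar m_{t-1}-\mathcal{L}_{t-1}\le 0$ (so $|y|$ is the ''free supply''). The speculator changes the stablecoin supply by $\Delta$ (new supply $\mathcal{L}+\Delta$), and for $\Delta>y$ the stablecoin market clears at dollar price $p^D(\Delta)=x/(\Delta-y)$; the speculator's assets after the trade are worth $z+\Delta p^D(\Delta)$. Its leverage is $\lambda=\beta\cdot\text{liabilities}/\text{assets}=\beta(\mathcal{L}+\Delta)/(z+\Delta p^D(\Delta))$, where $\beta$ is the collateral liquidation threshold, and the leverage constraint is $\lambda\le\tilde\lambda$ (the case $\tilde\lambda=1$ being the protocol's liquidation constraint). *)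

From mathcomp Require Import all_boot all_order all_algebra.
From mathcomp Require Import reals.
Set Implicit Arguments. Unset Strict Implicit. Unset Printing Implicit Defensive.
Import Order.TTheory GRing.Theory Num.Theory.
Local Open Scope ring_scope.

Definition pD (R : realType) (x y Delta : R) : R := x / (Delta - y).

Definition leverage_ok (R : realType) (beta lt L x y z Delta : R) : Prop :=
  y < Delta /\ beta * (L + Delta) <= lt * (z + Delta * pD x y Delta).

Definition levpoly (R : realType) (beta lt L x y z : R) : {poly R} :=
  (- beta) *: 'X^2 + (lt * (z + x) - beta * (L - y)) *: 'X
  + (- (lt * z * y) + beta * L * y)%:P.

(* Multiplying the leverage constraint by the positive quantity Delta - y clears
   the denominator of p^D and turns it into levpoly.[Delta] >= 0.  Since the
   leading coefficient -beta is negative, levpoly is nonnegative exactly between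
   its real roots, and negative everywhere when it has none. *)
From mathcomp Require Import all_boot all_order all_algebra.
From mathcomp Require Import reals ring lra.
Set Implicit Arguments. Unset Strict Implicit. Unset Printing Implicit Defensive.
Import Order.TTheory GRing.Theory Num.Theory.
Local Open Scope ring_scope.

Lemma size_deg2_poly (R : idomainType) (a b c : R) :
  a != 0 -> size (a *: 'X^2 + b *: 'X + c%:P) = 3%N.
Proof.
move=> a_neq0; rewrite -addrA size_polyDl size_scale ?size_polyXn //.
apply: leq_ltn_trans (size_polyD _ _) _.
by rewrite gtn_max size_polyC (leq_ltn_trans (size_scale_leq _ _)) ?size_polyX //;
   case: (c != 0).
Qed.

Lemma mul_subr_le0 (R : realDomainType) (a b t : R) :
  a <= b -> ((t - a) * (t - b) <= 0) = (a <= t <= b).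
Proof.
move=> le_ab; apply/idP/andP => [le0 | [le_at le_tb]].
  by split; nra.
by rewrite mulr_ge0_le0 ?subr_ge0 ?subr_le0.
Qed.

Lemma deg2_poly_noroot_lt0 (F : rcfType) (p : {poly F}) :
  size p = 3%N -> p`_2 <= 0 -> (forall r, ~~ root p r) -> forall t, p.[t] < 0.
Proof.
move=> p3 p2_le0 /(Pdeg2.Real.deg2_poly_noroot p3).
exact/(Pdeg2.Real.deg2_poly_lt0 p3 p2_le0).
Qed.

Section Levpoly.

Variables (R : realType) (beta lt L x y z : R).

Local Notation p := (levpoly beta lt L x y z).

Lemma levpoly_size : beta != 0 -> size p = 3%N.
Proof. by move=> beta_neq0; rewrite /levpoly size_deg2_poly ?oppr_eq0. Qed.

Lemma levpoly_coef2 : p`_2 = - beta.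
Proof. by rewrite /levpoly !coefE /= mulr1 mulr0 !addr0. Qed.

Lemma levpoly_hornerE Delta : y < Delta ->
  p.[Delta] = (Delta - y) * (lt * (z + Delta * pD x y Delta) - beta * (L + Delta)).
Proof.
move=> lt_yD; rewrite /levpoly /pD !hornerE /=.
by field; rewrite subr_eq0 gt_eqF.
Qed.

Lemma leverage_okE Delta : y < Delta ->
  leverage_ok beta lt L x y z Delta <-> 0 <= p.[Delta].
Proof.
move=> lt_yD; rewrite levpoly_hornerE // pmulr_rge0 ?subr_gt0 // subr_ge0.
by split=> [[]|].
Qed.

End Levpoly.

Theorem proposition3p1 (R : realType) (beta lt L x y z : R)
  (hbeta : 0 < beta) (hlt0 : 0 < lt) (hlt1 : lt <= 1)
  (hL : 0 <= L) (hx : 0 <= x) (hy : y <= 0) (hz : 0 <= z) :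
  (forall dmin dmax : R, dmin <= dmax ->
     levpoly beta lt L x y z = (- beta) *: (('X - dmin%:P) * ('X - dmax%:P)) ->
     forall Delta : R,
       leverage_ok beta lt L x y z Delta <->
       (dmin <= Delta /\ Delta <= dmax /\ y < Delta))
  /\
  ((forall r : R, ~~ root (levpoly beta lt L x y z) r) ->
     forall Delta : R, ~ leverage_ok beta lt L x y z Delta).
Proof.
split=> [dmin dmax le_minmax p_factor Delta | noroot Delta ok].
  have p_sign : (0 <= (levpoly beta lt L x y z).[Delta]) = (dmin <= Delta <= dmax).
    rewrite p_factor hornerZ hornerM !hornerXsubC mulNr oppr_ge0 pmulr_rle0 //.
    exact: mul_subr_le0.
  split=> [ok | [le_minD [le_Dmax lt_yD]]].
    have lt_yD : y < Delta by case: ok.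
    by move: ok; rewrite leverage_okE // p_sign => /andP[].
  by rewrite leverage_okE // p_sign le_minD.
have lt_yD : y < Delta by case: ok.
have p3 : size (levpoly beta lt L x y z) = 3%N by rewrite levpoly_size ?gt_eqF.
have p2_le0 : (levpoly beta lt L x y z)`_2 <= 0.
  by rewrite levpoly_coef2 oppr_le0 ltW.
move: ok; rewrite leverage_okE // leNgt.
by rewrite (deg2_poly_noroot_lt0 p3 p2_le0 noroot).
Qed.
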